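(* For all integers $d\ge1$ and $p\ge0$, the best constant $C_{p,d}$ in $$\|\partial_{x_i}v\|_{L^2(K^d)}\le C_{p,d}\|v\|_{L^2(K^d)}\qquad\forall v\in\mathbb{P}_p(K^d),\ \forall i\in\{1,\dots,d\}$$ satisfies $C_{p,d}\le\frac{\sqrt5}{4}(2\sqrt2)^d\,C_{p,1}$, where $K^d:=\{x\in\mathbb{R}^d: x_i\ge0\ \forall i,\ \sum_i x_i\le1\}$ is the unit simplex.
   Context: $\mathbb{P}_p(K^d)$ is the space of polynomials of total degree at most $p$ on $K^d$. $C_{p,1}$ denotes the best constant in the univariate inverse inequality $\|v'\|_{L^2(0,1)}\le C_{p,1}\|v\|_{L^2(0,1)}$ for all polynomials $v$ of degree at most $p$ on $(0,1)$. *)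

From Stdlib Require Import Reals List.
From Coquelicot Require Import Coquelicot.
Import ListNotations.
Open Scope R_scope.

(* Points of R^d are represented as x : nat -> R; only the coordinates
   x 0, ..., x (d-1) matter (coordinate i+1 of the paper is x i). *)

Definition scons (t : R) (y : nat -> R) : nat -> R :=
  fun j => match j with O => t | S j' => y j' end.

Definition upd (x : nat -> R) (i : nat) (t : R) : nat -> R :=
  fun j => if Nat.eqb j i then t else x j.

(* Integral over the scaled simplex s*K^d = {y in R^d : y_k >= 0, sum y_k <= s}
   (s >= 0), written as the iterated integral
     int_0^s ( int over (s - t) K^(d-1) of f(t, .) ) dt. *)
Fixpoint simplex_int (d : nat) (s : R) (f : (nat -> R) -> R) : R :=
  match d with
  | O => f (fun _ => 0)
  | S d' => RInt (fun t => simplex_int d' (s - t) (fun y => f (scons t y))) 0 s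
  end.

Definition L2norm (d : nat) (f : (nat -> R) -> R) : R :=
  sqrt (simplex_int d 1 (fun x => (f x) ^ 2)).

Fixpoint multi_indices (d p : nat) : list (list nat) :=
  match d with
  | O => [ [] ]
  | S d' => flat_map (fun k => map (cons k) (multi_indices d' (p - k)))
                      (seq 0 (S p))
  end.

Fixpoint monom (alpha : list nat) (x : nat -> R) : R :=
  match alpha with
  | [] => 1
  | a :: al => (x 0%nat) ^ a * monom al (fun j => x (S j))
  end.

Definition in_Pp (d p : nat) (v : (nat -> R) -> R) : Prop :=
  exists c : list nat -> R,
    forall x, v x = fold_right Rplus 0 (map (fun a => c a * monom a x) (multi_indices d p)).

Definition partial (i : nat) (v : (nat -> R) -> R) : (nat -> R) -> R :=
  fun x => Derive (fun t => v (upd x i t)) (x i).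

Definition inv_ineq_const (p d : nat) (C : R) : Prop :=
  forall v, in_Pp d p v -> forall i : nat, (i < d)%nat ->
    L2norm d (partial i v) <= C * L2norm d v.

Definition best_const (p d : nat) : Rbar := Glb_Rbar (inv_ineq_const p d).

(* The proof gives the factor [2 d - 1 <= sqrt 5 / 4 * (2 sqrt 2)^d].  For [x] in [K^d] let
   [lambda_k = 1 - sum_j x_j + x_k], the length of the chord of [K^d] through [x] parallel
   to [e_k]; the chord parallel to [e_i - e_j] has length [x_i + x_j].  Cauchy-Schwarz gives
     (d_i v)^2 <= (2d - 1) (lambda_i^2 (d_i v)^2
                            + sum_(j <> i) ((x_i + x_j)^2 (d_i v - d_j v)^2 + lambda_j^2 (d_j v)^2)).
   Each of these [2 d - 1] terms is a squared derivative along a chord weighted by the squared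
   chord length.  An affine symmetry of [K^d] maps it to [lambda_m^2 (d_m v)^2] with
   [m = d - 1], and on each chord parallel to [e_m] the univariate inequality, rescaled to
   the chord, bounds its integral by [C_(p,1)^2 ||v||^2].  Hence
   [||d_i v||^2 <= (2d - 1)^2 C_(p,1)^2 ||v||^2].
   All integrands are polynomials.  They are integrated exactly by expanding them in the
   monomials [(1 - sum_k x_k)^b prod_k x_k^(e_k)], whose integrals are Dirichlet integrals;
   this gives linearity, monotonicity and invariance under the symmetries of [K^d] for the
   iterated Riemann integral [simplex_int] on polynomials. *)

From Pilot Require Import Defs.
From Stdlib Require Import Reals Lra Lia List Arith FunctionalExtensionality.
From Coquelicot Require Import Coquelicot.
Import ListNotations.
Open Scope R_scope.

Fixpoint bigf {A} (op : A -> A -> A) (u : A) (n : nat) (g : nat -> A) : A :=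
  match n with O => u | S n' => op (g O) (bigf op u n' (fun k => g (S k))) end.
Notation sumf := (bigf Rplus 0).
Notation prodf := (bigf Rmult 1).
Notation sumn := (bigf Nat.add 0%nat).

(* [upd] of Defs with an arbitrary codomain: [upd x i t] and [fupd x i t] are convertible *)
Definition fupd {A} (g : nat -> A) (i : nat) (a : A) : nat -> A :=
  fun j => if Nat.eqb j i then a else g j.

Lemma fupd_eq {A} (g : nat -> A) i a : fupd g i a i = a.
Proof. unfold fupd. now rewrite Nat.eqb_refl. Qed.

Lemma fupd_fupd {A} (g : nat -> A) i a b : fupd (fupd g i a) i b = fupd g i b.
Proof. apply functional_extensionality; intro k; unfold fupd. now destruct (Nat.eqb k i). Qed.

Definition transp (i m k : nat) : nat :=
  if Nat.eqb k i then m else if Nat.eqb k m then i else k.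

Lemma transpK i m k : transp i m (transp i m k) = k.
Proof.
  unfold transp. destruct (Nat.eqb_spec k i).
  - subst. destruct (Nat.eqb_spec m i); subst; auto. now rewrite Nat.eqb_refl.
  - destruct (Nat.eqb_spec k m).
    + subst. now rewrite Nat.eqb_refl.
    + destruct (Nat.eqb_spec k i), (Nat.eqb_spec k m); auto; lia.
Qed.

Lemma transp_lt i m n k : (i < n)%nat -> (m < n)%nat -> (k < n)%nat -> (transp i m k < n)%nat.
Proof. intros. unfold transp. now destruct (Nat.eqb k i); [|destruct (Nat.eqb k m)]. Qed.

Section Bigop.
Context {A : Type} (op : A -> A -> A) (u : A).

Lemma bigf_ext n g h : (forall k, (k < n)%nat -> g k = h k) -> bigf op u n g = bigf op u n h.
Proof.
  revert g h; induction n; intros g h H; simpl; auto.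
  rewrite H by lia. f_equal. apply IHn. intros; apply H; lia.
Qed.

Hypothesis op_assoc : forall a b c, op (op a b) c = op a (op b c).
Hypothesis op_comm : forall a b, op a b = op b a.
Hypothesis op_unit : forall a, op u a = a.

Lemma bigf_extract n g k : (k < n)%nat -> bigf op u n g = op (g k) (bigf op u n (fupd g k u)).
Proof.
  revert g k; induction n; intros g k Hk; [lia|].
  destruct k as [|k']; simpl.
  - now rewrite op_unit.
  - rewrite (IHn (fun k => g (S k)) k') by lia.
    rewrite <- !op_assoc, (op_comm (g O)). reflexivity.
Qed.

Lemma bigf_recr n g : bigf op u (S n) g = op (bigf op u n g) (g n).
Proof.
  revert g; induction n; intros g.
  - apply op_comm.
  - change (op (g O) (bigf op u (S n) (fun k => g (S k)))
            = op (op (g O) (bigf op u n (fun k => g (S k)))) (g (S n))).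
    now rewrite IHn, op_assoc.
Qed.

Lemma bigf_split n g h :
  bigf op u n (fun k => op (g k) (h k)) = op (bigf op u n g) (bigf op u n h).
Proof.
  revert g h; induction n; intros g h; simpl.
  - now rewrite op_unit.
  - rewrite IHn, !op_assoc. f_equal. rewrite <- !op_assoc. f_equal. apply op_comm.
Qed.

Lemma bigf_unit n : bigf op u n (fun _ => u) = u.
Proof. induction n; simpl; auto. now rewrite IHn. Qed.

Lemma bigf_transp n g i m : (i < n)%nat -> (m < n)%nat ->
  bigf op u n (fun k => g (transp i m k)) = bigf op u n g.
Proof.
  intros Hi Hm. destruct (Nat.eqb_spec i m).
  - subst. apply bigf_ext. intros k _. unfold transp. now destruct (Nat.eqb_spec k m); subst.
  - rewrite (bigf_extract n g i Hi), (bigf_extract n (fupd g i u) m Hm).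
    rewrite (bigf_extract n _ i Hi), (bigf_extract n (fupd _ i u) m Hm).
    assert (E1 : Nat.eqb m i = false) by (apply Nat.eqb_neq; lia).
    unfold fupd at 1 3. rewrite E1. unfold transp at 1 2. rewrite Nat.eqb_refl, E1, Nat.eqb_refl.
    rewrite <- !op_assoc, (op_comm (g m) (g i)). f_equal; [unfold fupd; now rewrite E1|].
    apply bigf_ext. intros k _. unfold fupd, transp.
    now destruct (Nat.eqb_spec k m), (Nat.eqb_spec k i).
Qed.

End Bigop.

Definition sumf_extract := bigf_extract Rplus 0 Rplus_assoc Rplus_comm Rplus_0_l.
Definition prodf_extract := bigf_extract Rmult 1 Rmult_assoc Rmult_comm Rmult_1_l.
Definition sumn_extract :=
  bigf_extract Nat.add 0%nat (fun a b c => eq_sym (Nat.add_assoc a b c)) Nat.add_comm Nat.add_0_l.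
Definition sumf_recr := bigf_recr Rplus 0 Rplus_assoc Rplus_comm.
Definition prodf_recr := bigf_recr Rmult 1 Rmult_assoc Rmult_comm.
Definition sumf_split := bigf_split Rplus 0 Rplus_assoc Rplus_comm Rplus_0_l.
Definition prodf_split := bigf_split Rmult 1 Rmult_assoc Rmult_comm Rmult_1_l.
Definition sumf_transp := bigf_transp Rplus 0 Rplus_assoc Rplus_comm Rplus_0_l.
Definition prodf_transp := bigf_transp Rmult 1 Rmult_assoc Rmult_comm Rmult_1_l.
Definition sumn_transp :=
  bigf_transp Nat.add 0%nat (fun a b c => eq_sym (Nat.add_assoc a b c)) Nat.add_comm Nat.add_0_l.
Definition sumf0 := bigf_unit Rplus 0 Rplus_0_l.
Definition prodf1 := bigf_unit Rmult 1 Rmult_1_l.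

Lemma sumf_scal n c g : sumf n (fun k => c * g k) = c * sumf n g.
Proof. revert g; induction n; intros; simpl; [ring|]. rewrite IHn; ring. Qed.

Lemma sumf_le n g h : (forall k, (k < n)%nat -> g k <= h k) -> sumf n g <= sumf n h.
Proof.
  revert g h; induction n; intros g h H; simpl; [lra|].
  apply Rplus_le_compat; [apply H; lia | apply IHn; intros; apply H; lia].
Qed.

Lemma sumf_ge0 n g : (forall k, (k < n)%nat -> 0 <= g k) -> 0 <= sumf n g.
Proof. intros H. pose proof (sumf_le n (fun _ => 0) g H) as Hle. now rewrite sumf0 in Hle. Qed.

Lemma sumf_const n c : sumf n (fun _ => c) = INR n * c.
Proof. induction n; simpl sumf; [simpl; ring|]. rewrite IHn, S_INR; ring. Qed.

Lemma sumf_fupd_const n i c : (i < n)%nat -> sumf n (fupd (fun _ => c) i 0) = (INR n - 1) * c.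
Proof. intros H. pose proof (sumf_extract n (fun _ => c) i H) as E. rewrite sumf_const in E. lra. Qed.

Lemma sumf_fupd n g j a : (j < n)%nat -> sumf n (fupd g j a) = a + sumf n (fupd g j 0).
Proof. intros H. now rewrite (sumf_extract n _ j H), fupd_eq, fupd_fupd. Qed.
Lemma prodf_fupd n g j a : (j < n)%nat -> prodf n (fupd g j a) = a * prodf n (fupd g j 1).
Proof. intros H. now rewrite (prodf_extract n _ j H), fupd_eq, fupd_fupd. Qed.
Lemma sumn_fupd n g j a : (j < n)%nat -> sumn n (fupd g j a) = (a + sumn n (fupd g j 0))%nat.
Proof. intros H. now rewrite (sumn_extract n _ j H), fupd_eq, fupd_fupd. Qed.

Lemma bigf_fupd_out {A} op (u : A) n g j a : (n <= j)%nat -> bigf op u n (fupd g j a) = bigf op u n g.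
Proof. intros H. apply bigf_ext. intros k Hk. unfold fupd. destruct (Nat.eqb_spec k j); auto; lia. Qed.

Inductive pexpr := PC (r : R) | PV (k : nat) | PA (a b : pexpr) | PM (a b : pexpr).

Fixpoint peval (e : pexpr) (x : nat -> R) : R :=
  match e with
  | PC r => r | PV k => x k
  | PA a b => peval a x + peval b x | PM a b => peval a x * peval b x
  end.

Fixpoint pdeg (e : pexpr) : nat :=
  match e with
  | PC _ => 0 | PV _ => 1
  | PA a b => Nat.max (pdeg a) (pdeg b) | PM a b => pdeg a + pdeg b
  end.

Fixpoint pvars_lt (n : nat) (e : pexpr) : Prop :=
  match e with
  | PC _ => True | PV k => (k < n)%nat
  | PA a b | PM a b => pvars_lt n a /\ pvars_lt n b
  end.

Fixpoint pderiv (dir : nat -> R) (e : pexpr) : pexpr :=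
  match e with
  | PC _ => PC 0 | PV k => PC (dir k)
  | PA a b => PA (pderiv dir a) (pderiv dir b)
  | PM a b => PA (PM (pderiv dir a) b) (PM a (pderiv dir b))
  end.

Fixpoint psubst (s : nat -> pexpr) (e : pexpr) : pexpr :=
  match e with
  | PC r => PC r | PV k => s k
  | PA a b => PA (psubst s a) (psubst s b) | PM a b => PM (psubst s a) (psubst s b)
  end.

Definition psq (e : pexpr) : pexpr := PM e e.

Lemma peval_ext n e x y : pvars_lt n e -> (forall k, (k < n)%nat -> x k = y k) ->
  peval e x = peval e y.
Proof.
  intros He Hxy. induction e; simpl in *; auto; destruct He; now rewrite IHe1, IHe2.
Qed.

Lemma peval_subst s e x : peval (psubst s e) x = peval e (fun k => peval (s k) x).
Proof. induction e; simpl; auto; now rewrite IHe1, IHe2. Qed.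

Lemma pderiv_subst dir s e x :
  peval (pderiv dir (psubst s e)) x
  = peval (pderiv (fun k => peval (pderiv dir (s k)) x) e) (fun k => peval (s k) x).
Proof. induction e; simpl; auto; now rewrite ?IHe1, ?IHe2, ?peval_subst. Qed.

Lemma pderiv_lin a b d1 d2 e x :
  peval (pderiv (fun k => a * d1 k + b * d2 k) e) x
  = a * peval (pderiv d1 e) x + b * peval (pderiv d2 e) x.
Proof. induction e; simpl; try ring; rewrite IHe1, IHe2; ring. Qed.

Lemma pvars_lt_mono n n' e : (n <= n')%nat -> pvars_lt n e -> pvars_lt n' e.
Proof. induction e; simpl; intuition lia. Qed.

Lemma pvars_lt_deriv n dir e : pvars_lt n e -> pvars_lt n (pderiv dir e).
Proof. induction e; simpl; intuition. Qed.

Lemma pvars_lt_subst n n' s e :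
  pvars_lt n e -> (forall k, (k < n)%nat -> pvars_lt n' (s k)) -> pvars_lt n' (psubst s e).
Proof. intros Hw Hs. induction e; simpl in *; auto; destruct Hw; split; auto. Qed.

Lemma pdeg_subst s e : (forall k, (pdeg (s k) <= 1)%nat) -> (pdeg (psubst s e) <= pdeg e)%nat.
Proof. intros H. induction e; simpl; [lia | apply H | lia | lia]. Qed.

Definition line (a dir : nat -> R) (t : R) : nat -> R := fun k => a k + t * dir k.

Lemma is_derive_peval_line e a dir t :
  is_derive (fun t => peval e (line a dir t)) t (peval (pderiv dir e) (line a dir t)).
Proof.
  induction e; simpl.
  - apply (is_derive_const r t).
  - unfold line. auto_derive; auto. ring.
  - now apply (is_derive_plus _ _ _ _ _ IHe1 IHe2).
  - eapply is_derive_ext; [|apply (is_derive_mult _ _ _ _ _ IHe1 IHe2)]; [reflexivity|].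
    intros; apply Rmult_comm.
Qed.

Lemma ex_RInt_peval_line e a dir lo hi : ex_RInt (fun t => peval e (line a dir t)) lo hi.
Proof.
  apply (@ex_RInt_continuous R_CompleteNormedModule). intros t _.
  apply (@ex_derive_continuous R_AbsRing R_NormedModule). eexists. apply is_derive_peval_line.
Qed.

Definition basis (i : nat) : nat -> R := fun k => if Nat.eqb k i then 1 else 0.

Lemma upd_line x i t : upd x i t = line (upd x i 0) (basis i) t.
Proof.
  apply functional_extensionality; intro k. unfold upd, line, basis.
  destruct (Nat.eqb k i); ring.
Qed.

Lemma partial_peval e i x : partial i (peval e) x = peval (pderiv (basis i) e) x.
Proof.
  unfold partial.
  rewrite (Derive_ext _ (fun t => peval e (line (upd x i 0) (basis i) t)))
    by (intros; now rewrite <- upd_line).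
  rewrite (is_derive_unique _ _ _ (is_derive_peval_line e _ _ _)), <- upd_line.
  f_equal. apply functional_extensionality; intro k. unfold upd.
  now destruct (Nat.eqb_spec k i); subst.
Qed.

Ltac fold_INR_S := repeat match goal with
  |- context [match ?n with 0%nat => 1 | S _ => INR ?n + 1 end] =>
    change (match n with 0%nat => 1 | S _ => INR n + 1 end) with (INR (S n)) end.

(* Coquelicot states equalities of integrals in the carrier of a normed module *)
Ltac as_R_eq := match goal with |- ?a = ?b => change (@eq R a b) end.

Ltac simpl_R_ops :=
  unfold scal, minus, plus, opp, mult, zero; simpl; unfold mult, plus, opp, zero; simpl;
  fold_INR_S; try as_R_eq.

Definition factR (n : nat) : R := INR (fact n).

Lemma factR_neq0 n : factR n <> 0.
Proof. apply INR_fact_neq_0. Qed.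

Lemma factR_S n : factR (S n) = INR (S n) * factR n.
Proof. unfold factR. now rewrite fact_simpl, mult_INR. Qed.

Lemma INR_S_neq0 n : INR (S n) <> 0.
Proof. apply not_0_INR. lia. Qed.

Lemma is_RInt_val (f : R -> R) a b v w : is_RInt f a b v -> v = w -> is_RInt f a b w.
Proof. now intros H ->. Qed.

Lemma is_RInt_beta a : forall b s, is_RInt (fun t => t ^ a * (s - t) ^ b) 0 s
  (s ^ (a + b + 1) * factR a * factR b / factR (a + b + 1)).
Proof.
  induction a; intros b s.
  - pose (F t := - (s - t) ^ (S b) / INR (S b)).
    eapply is_RInt_val; [apply (is_RInt_derive F)|].
    + intros t _. unfold F. auto_derive; [auto|]. fold_INR_S.
      replace (s + - t) with (s - t) by ring. field. apply INR_S_neq0.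
    + intros t _. apply (@ex_derive_continuous R_AbsRing R_NormedModule). auto_derive. auto.
    + unfold F. simpl_R_ops. replace (b + 1)%nat with (S b) by lia.
      rewrite factR_S. replace (factR 0) with 1 by reflexivity.
      replace (s - s) with 0 by ring. replace (s - 0) with s by ring. simpl pow.
      field. split; [apply factR_neq0 | apply INR_S_neq0].
  - (* integration by parts against [t ^ S a * (s - t) ^ S b], which vanishes at 0 and s *)
    pose (dF t := INR (S a) * (t ^ a * (s - t) ^ (S b)) - INR (S b) * (t ^ (S a) * (s - t) ^ b)).
    assert (HdF : is_RInt dF 0 s 0).
    { eapply is_RInt_val; [apply (is_RInt_derive (fun t => t ^ (S a) * (s - t) ^ (S b)) dF)|].
      + intros t _. unfold dF. auto_derive; auto. fold_INR_S.
        replace (s + - t) with (s - t) by ring. simpl pow. ring.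
      + intros t _. unfold dF. apply (@ex_derive_continuous R_AbsRing R_NormedModule).
        auto_derive. auto.
      + simpl_R_ops. ring. }
    pose proof (is_RInt_minus _ _ _ _ _ _ (is_RInt_scal _ _ _ (INR (S a)) _ (IHa (S b) s)) HdF) as H.
    eapply is_RInt_val.
    + eapply is_RInt_ext; [|exact (is_RInt_scal _ _ _ (/ INR (S b)) _ H)].
      intros t _. unfold dF. simpl_R_ops. field. apply INR_S_neq0.
    + simpl_R_ops. replace (a + S b + 1)%nat with (S (a + b + 1)) by lia.
      replace (S a + b + 1)%nat with (S (a + b + 1)) by lia.
      rewrite (factR_S b), (factR_S a). simpl pow.
      field. split; [apply factR_neq0 | apply INR_S_neq0].
Qed.

(* [(c, b, e)] stands for [c * (s - sum_k x_k) ^ b * prod_k x_k ^ e k] *)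
Definition bterm := (R * nat * (nat -> nat))%type.

Definition bmonom n s b (e : nat -> nat) (x : nat -> R) : R :=
  (s - sumf n x) ^ b * prodf n (fun k => x k ^ e k).

Definition bterm_eval n s (it : bterm) x : R := let '(c, b, e) := it in c * bmonom n s b e x.

Definition bcomb n s (L : list bterm) x : R :=
  fold_right Rplus 0 (map (fun it => bterm_eval n s it x) L).

(* the Dirichlet integral of [bmonom n s b e] over [s K^n] *)
Definition bmonom_int n s b (e : nat -> nat) : R :=
  s ^ (b + sumn n e + n) * factR b * prodf n (fun k => factR (e k)) / factR (b + sumn n e + n).

Definition bterm_int n s (it : bterm) : R := let '(c, b, e) := it in c * bmonom_int n s b e.

Definition bcomb_int n s (L : list bterm) : R := fold_right Rplus 0 (map (bterm_int n s) L).

Definition bterm_shift (t : R) (it : bterm) : bterm :=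
  let '(c, b, e) := it in (c * t ^ e 0%nat, b, fun k => e (S k)).

Lemma bcomb_scons n s L t y :
  bcomb (S n) s L (scons t y) = bcomb n (s - t) (map (bterm_shift t) L) y.
Proof.
  unfold bcomb; induction L as [|[[c b] e] L IH]; simpl; auto.
  rewrite IH. unfold bmonom. simpl.
  change (bigf Rplus 0 n (fun k => y k)) with (sumf n y).
  replace (s - (t + sumf n y)) with (s - t - sumf n y) by ring. ring.
Qed.

Lemma is_RInt_bcomb_int n s L :
  is_RInt (fun t => bcomb_int n (s - t) (map (bterm_shift t) L)) 0 s (bcomb_int (S n) s L).
Proof.
  unfold bcomb_int; induction L as [|[[c b] e] L IH]; simpl.
  - eapply is_RInt_val; [apply (is_RInt_const 0 s 0)|]. simpl_R_ops. ring.
  - apply (@is_RInt_plus R_NormedModule); [|exact IH].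
    set (M := (b + sumn n (fun k => e (S k)) + n)%nat).
    set (K := factR b * prodf n (fun k => factR (e (S k))) / factR M).
    eapply is_RInt_val.
    + eapply is_RInt_ext; [|exact (is_RInt_scal _ _ _ (c * K) _ (is_RInt_beta (e 0%nat) M s))].
      intros t _. simpl_R_ops. unfold bmonom_int. fold M. unfold K. field. apply factR_neq0.
    + simpl_R_ops. unfold bmonom_int. simpl sumn. simpl prodf.
      replace (b + (e 0%nat + sumn n (fun k => e (S k))) + S n)%nat with (e 0%nat + M + 1)%nat
        by (unfold M; lia).
      unfold K. field. split; apply factR_neq0.
Qed.

Lemma simplex_int_bcomb n : forall s L, simplex_int n s (bcomb n s L) = bcomb_int n s L.
Proof.
  induction n; intros s L.
  - simpl. unfold bcomb, bcomb_int. induction L as [|[[c b] e] L IH]; simpl; auto.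
    rewrite IH. unfold bmonom, bmonom_int. simpl.
    replace (b + 0 + 0)%nat with b by lia. replace (s - 0) with s by ring.
    field. apply factR_neq0.
  - simpl. rewrite <- (is_RInt_unique _ _ _ _ (is_RInt_bcomb_int n s L)). apply RInt_ext.
    intros t _. rewrite <- IHn. f_equal. apply functional_extensionality; intro y.
    apply bcomb_scons.
Qed.

Definition in_simplex n s (x : nat -> R) : Prop :=
  (forall k, (k < n)%nat -> 0 <= x k) /\ sumf n x <= s.

Lemma in_simplex_scons n s t y :
  0 <= t -> in_simplex n (s - t) y -> in_simplex (S n) s (scons t y).
Proof.
  intros Ht [H1 H2]. split.
  - intros [|k] Hk; simpl; auto. apply H1; lia.
  - simpl. change (bigf Rplus 0 n (fun k => y k)) with (sumf n y). lra.
Qed.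

Lemma bcomb_int_ge0 n : forall s L, 0 <= s ->
  (forall x, in_simplex n s x -> 0 <= bcomb n s L x) -> 0 <= bcomb_int n s L.
Proof.
  induction n; intros s L Hs H.
  - rewrite <- simplex_int_bcomb. apply H. split; [intros; lia | simpl; lra].
  - rewrite <- (is_RInt_unique _ _ _ _ (is_RInt_bcomb_int n s L)).
    apply RInt_ge_0; auto.
    + eexists; apply is_RInt_bcomb_int.
    + intros t Ht. apply IHn; [lra|]. intros y Hy. rewrite <- bcomb_scons. apply H.
      apply in_simplex_scons; auto; lra.
Qed.

Lemma bcomb_app n s L1 L2 x : bcomb n s (L1 ++ L2) x = bcomb n s L1 x + bcomb n s L2 x.
Proof. unfold bcomb. induction L1; simpl; [ring|]. rewrite IHL1. ring. Qed.

Lemma bcomb_int_app n s L1 L2 : bcomb_int n s (L1 ++ L2) = bcomb_int n s L1 + bcomb_int n s L2.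
Proof. unfold bcomb_int. induction L1; simpl; [ring|]. rewrite IHL1. ring. Qed.

Definition bscale (a : R) (L : list bterm) : list bterm :=
  map (fun it => let '(c, b, e) := it in (a * c, b, e)) L.

Lemma bcomb_scale n s a L x : bcomb n s (bscale a L) x = a * bcomb n s L x.
Proof. unfold bcomb, bscale. induction L as [|[[c b] e] L IH]; simpl; [ring|]. rewrite IH. ring. Qed.

Lemma bcomb_int_scale n s a L : bcomb_int n s (bscale a L) = a * bcomb_int n s L.
Proof.
  unfold bcomb_int, bscale. induction L as [|[[c b] e] L IH]; simpl; [ring|]. rewrite IH. ring.
Qed.

Definition bterm_mul (i1 i2 : bterm) : bterm :=
  let '(c1, b1, e1) := i1 in let '(c2, b2, e2) := i2 in
  (c1 * c2, (b1 + b2)%nat, fun k => (e1 k + e2 k)%nat).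

Definition bmul (L1 L2 : list bterm) : list bterm := flat_map (fun i1 => map (bterm_mul i1) L2) L1.

Lemma bmonom_mul n s b1 e1 b2 e2 x :
  bmonom n s (b1 + b2) (fun k => (e1 k + e2 k)%nat) x = bmonom n s b1 e1 x * bmonom n s b2 e2 x.
Proof.
  unfold bmonom. rewrite pow_add.
  rewrite (bigf_ext Rmult 1 n _ (fun k => x k ^ e1 k * x k ^ e2 k)) by (intros; apply pow_add).
  rewrite prodf_split. ring.
Qed.

Lemma bcomb_mul n s L1 L2 x : bcomb n s (bmul L1 L2) x = bcomb n s L1 x * bcomb n s L2 x.
Proof.
  induction L1 as [|i1 L1 IH]; [unfold bcomb; simpl; ring|].
  unfold bmul. simpl flat_map. rewrite bcomb_app. fold (bmul L1 L2). rewrite IH.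
  assert (E : bcomb n s (map (bterm_mul i1) L2) x = bterm_eval n s i1 x * bcomb n s L2 x).
  { clear IH. unfold bcomb. induction L2 as [|i2 L2 IH2]; simpl; [ring|]. rewrite IH2.
    destruct i1 as [[c1 b1] e1], i2 as [[c2 b2] e2]; simpl. rewrite bmonom_mul. ring. }
  rewrite E. unfold bcomb. simpl. ring.
Qed.

Definition bpoly n (f : (nat -> R) -> R) : Prop := exists L, forall x, f x = bcomb n 1 L x.

Definition delta (k : nat) : nat -> nat := fun j => if Nat.eqb j k then 1%nat else 0%nat.

Lemma bpoly_peval n e : pvars_lt n e -> bpoly n (peval e).
Proof.
  induction e; simpl; intros He.
  - exists [(r, 0%nat, fun _ => 0%nat)]. intros x.
    unfold bcomb, bterm_eval, bmonom; cbn [map fold_right].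
    rewrite (bigf_ext Rmult 1 n _ (fun _ => 1)), prodf1 by auto. ring.
  - exists [(1, 0%nat, delta k)]. intros x. unfold bcomb, bterm_eval, bmonom; cbn [map fold_right].
    rewrite (prodf_extract n _ k He). unfold delta at 1. rewrite Nat.eqb_refl.
    rewrite (bigf_ext Rmult 1 n _ (fun _ => 1)), prodf1; [ring|].
    intros j _. unfold fupd, delta. now destruct (Nat.eqb j k).
  - destruct He as [H1 H2], (IHe1 H1) as [L1 E1], (IHe2 H2) as [L2 E2].
    exists (L1 ++ L2). intros x. now rewrite bcomb_app, E1, E2.
  - destruct He as [H1 H2], (IHe1 H1) as [L1 E1], (IHe2 H2) as [L2 E2].
    exists (bmul L1 L2). intros x. now rewrite bcomb_mul, E1, E2.
Qed.

Lemma simplex_int_ext n s f g : (forall x, f x = g x) -> simplex_int n s f = simplex_int n s g.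
Proof. intros H. now replace f with g by (apply functional_extensionality; auto). Qed.

Lemma simplex_int_bpoly n f L : (forall x, f x = bcomb n 1 L x) -> simplex_int n 1 f = bcomb_int n 1 L.
Proof. intros H. rewrite (simplex_int_ext n 1 f (bcomb n 1 L) H). apply simplex_int_bcomb. Qed.

Lemma simplex_int_le n f g : bpoly n f -> bpoly n g ->
  (forall x, in_simplex n 1 x -> f x <= g x) -> simplex_int n 1 f <= simplex_int n 1 g.
Proof.
  intros [L1 E1] [L2 E2] H. rewrite (simplex_int_bpoly n f L1 E1), (simplex_int_bpoly n g L2 E2).
  enough (0 <= bcomb_int n 1 (L2 ++ bscale (-1) L1))
    by (rewrite bcomb_int_app, bcomb_int_scale in *; lra).
  apply bcomb_int_ge0; [lra|]. intros x Hx.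
  rewrite bcomb_app, bcomb_scale, <- E1, <- E2. specialize (H x Hx). lra.
Qed.

Lemma simplex_int_plus n f g : bpoly n f -> bpoly n g ->
  simplex_int n 1 (fun x => f x + g x) = simplex_int n 1 f + simplex_int n 1 g.
Proof.
  intros [L1 E1] [L2 E2]. rewrite (simplex_int_bpoly n f L1 E1), (simplex_int_bpoly n g L2 E2).
  rewrite (simplex_int_bpoly _ _ (L1 ++ L2)); [apply bcomb_int_app|].
  intros x. now rewrite bcomb_app, E1, E2.
Qed.

Lemma simplex_int_scal n c f : bpoly n f -> simplex_int n 1 (fun x => c * f x) = c * simplex_int n 1 f.
Proof.
  intros [L E]. rewrite (simplex_int_bpoly n f L E), (simplex_int_bpoly _ _ (bscale c L)).
  - apply bcomb_int_scale.
  - intros x. now rewrite bcomb_scale, E.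
Qed.

Lemma simplex_int_peel_last m : forall s f, simplex_int (S m) s f =
  simplex_int m s (fun y => RInt (fun t => f (upd y m t)) 0 (s - sumf m y)).
Proof.
  induction m; intros s f.
  - simpl. replace (s - 0) with s by ring. f_equal. apply functional_extensionality; intro t.
    f_equal. now apply functional_extensionality; intros [|j].
  - change (RInt (fun t => simplex_int (S m) (s - t) (fun y => f (scons t y))) 0 s =
      RInt (fun t => simplex_int m (s - t) (fun y => RInt (fun u => f (upd (scons t y) (S m) u)) 0
         (s - sumf (S m) (scons t y)))) 0 s).
    apply RInt_ext; intros t _. rewrite IHm. apply simplex_int_ext; intro y. simpl.
    change (bigf Rplus 0 m (fun k => y k)) with (sumf m y).
    replace (s - (t + sumf m y)) with (s - t - sumf m y) by ring.
    apply RInt_ext; intros u _. f_equal. now apply functional_extensionality; intros [|j].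
Qed.

Definition bterm_peel m (it : bterm) : bterm :=
  let '(c, b, e) := it in (c * factR (e m) * factR b / factR (e m + b + 1), (e m + b + 1)%nat, e).

Lemma bmonom_upd_last m b e y t : bmonom (S m) 1 b e (upd y m t)
  = prodf m (fun k => y k ^ e k) * (t ^ e m * ((1 - sumf m y) - t) ^ b).
Proof.
  unfold bmonom. rewrite sumf_recr, prodf_recr.
  change (upd y m t) with (fupd y m t). rewrite bigf_fupd_out, fupd_eq by lia.
  rewrite (bigf_ext Rmult 1 m _ (fun k => y k ^ e k)).
  - replace (1 - (sumf m y + t)) with (1 - sumf m y - t) by ring. ring.
  - intros k Hk. unfold fupd. destruct (Nat.eqb_spec k m); [lia | auto].
Qed.

Lemma RInt_bcomb_last m L y :
  RInt (fun t => bcomb (S m) 1 L (upd y m t)) 0 (1 - sumf m y) = bcomb m 1 (map (bterm_peel m) L) y.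
Proof.
  apply is_RInt_unique. unfold bcomb. induction L as [|[[c b] e] L IH]; simpl.
  - eapply is_RInt_val; [apply (is_RInt_const 0 _ 0)|]. simpl_R_ops. ring.
  - apply (@is_RInt_plus R_NormedModule); [|exact IH].
    set (P := prodf m (fun k => y k ^ e k)).
    eapply is_RInt_val.
    + eapply is_RInt_ext; [|exact (is_RInt_scal _ _ _ (c * P) _ (is_RInt_beta (e m) b (1 - sumf m y)))].
      intros t _. simpl_R_ops. rewrite bmonom_upd_last. fold P. ring.
    + simpl_R_ops. unfold bmonom. fold P. field. apply factR_neq0.
Qed.

Lemma bpoly_RInt_last m e : pvars_lt (S m) e ->
  bpoly m (fun y => RInt (fun t => peval e (upd y m t)) 0 (1 - sumf m y)).
Proof.
  intros H. destruct (bpoly_peval (S m) e H) as [L E]. exists (map (bterm_peel m) L). intros y.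
  rewrite <- RInt_bcomb_last. apply RInt_ext. intros; apply E.
Qed.

Fixpoint psum (n : nat) : pexpr := match n with O => PC 0 | S n' => PA (psum n') (PV n') end.

Lemma peval_psum n x : peval (psum n) x = sumf n x.
Proof.
  induction n; [reflexivity|].
  change (peval (psum n) x + x n = sumf (S n) x). now rewrite IHn, sumf_recr.
Qed.

Lemma pvars_lt_psum n : pvars_lt n (psum n).
Proof.
  enough (forall m, (m <= n)%nat -> pvars_lt n (psum m)) by auto.
  induction m; simpl; auto. split; [apply IHm|]; lia.
Qed.

Lemma pdeg_psum n : (pdeg (psum n) <= 1)%nat.
Proof. induction n; simpl; lia. Qed.

Lemma pderiv_psum dir n x : peval (pderiv dir (psum n)) x = sumf n dir.
Proof.
  induction n; [reflexivity|].
  change (peval (pderiv dir (psum n)) x + dir n = sumf (S n) dir). now rewrite IHn, sumf_recr.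
Qed.

Definition plam n : pexpr := PA (PC 1) (PM (PC (-1)) (psum n)).

Lemma peval_plam n x : peval (plam n) x = 1 - sumf n x.
Proof. simpl. rewrite peval_psum. ring. Qed.

Lemma pderiv_plam dir n x : peval (pderiv dir (plam n)) x = - sumf n dir.
Proof. simpl. rewrite pderiv_psum. ring. Qed.

Lemma pvars_lt_plam n n' : (n <= n')%nat -> pvars_lt n' (plam n).
Proof. intros H. repeat split. eapply pvars_lt_mono; [exact H | apply pvars_lt_psum]. Qed.

Lemma pdeg_plam n : (pdeg (plam n) <= 1)%nat.
Proof. simpl. pose proof (pdeg_psum n). lia. Qed.

(* Affine symmetries of [K^n]: the transposition of the coordinates [i] and [m], and the
   reflection exchanging [x_j] with the barycentric coordinate [1 - sum_k x_k]. *)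
Definition psub_transp i m : nat -> pexpr := fun k => PV (transp i m k).
Definition psub_reflect n j : nat -> pexpr := fun k => if Nat.eqb k j then plam n else PV k.

Lemma pvars_lt_psub_reflect n j k : (k < n)%nat -> pvars_lt n (psub_reflect n j k).
Proof. intros. unfold psub_reflect. destruct (Nat.eqb k j); [now apply pvars_lt_plam | exact H]. Qed.

Lemma pdeg_psub_transp i m k : (pdeg (psub_transp i m k) <= 1)%nat.
Proof. simpl; lia. Qed.

Lemma pdeg_psub_reflect n j k : (pdeg (psub_reflect n j k) <= 1)%nat.
Proof. unfold psub_reflect. destruct (Nat.eqb k j); [apply pdeg_plam | simpl; lia]. Qed.

Definition bterm_transp i m (it : bterm) : bterm :=
  let '(c, b, e) := it in (c, b, fun k => e (transp i m k)).
Definition bterm_reflect j (it : bterm) : bterm := let '(c, b, e) := it in (c, e j, fupd e j b).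

Lemma bcomb_transp n i m L x : (i < n)%nat -> (m < n)%nat ->
  bcomb n 1 L (fun k => x (transp i m k)) = bcomb n 1 (map (bterm_transp i m) L) x.
Proof.
  intros Hi Hm. unfold bcomb. induction L as [|[[c b] e] L IH]; simpl; auto.
  rewrite IH. do 2 f_equal. unfold bmonom. rewrite (sumf_transp n x i m Hi Hm). f_equal.
  rewrite <- (prodf_transp n (fun k => x k ^ e (transp i m k)) i m Hi Hm). f_equal.
  apply functional_extensionality; intro k. now rewrite transpK.
Qed.

Lemma bcomb_int_transp n i m L : (i < n)%nat -> (m < n)%nat ->
  bcomb_int n 1 (map (bterm_transp i m) L) = bcomb_int n 1 L.
Proof.
  intros Hi Hm. unfold bcomb_int. induction L as [|[[c b] e] L IH]; simpl; auto.
  rewrite IH. unfold bmonom_int. rewrite (sumn_transp n e i m Hi Hm).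
  now rewrite (prodf_transp n (fun k => factR (e k)) i m Hi Hm).
Qed.

Lemma bcomb_reflect n j L x : (j < n)%nat ->
  bcomb n 1 L (fupd x j (1 - sumf n x)) = bcomb n 1 (map (bterm_reflect j) L) x.
Proof.
  intros Hj. unfold bcomb. induction L as [|[[c b] e] L IH]; simpl; auto.
  rewrite IH. unfold bmonom. set (r := sumf n (fupd x j 0)).
  assert (Hx : sumf n x = x j + r) by (unfold r; apply sumf_extract, Hj).
  rewrite (sumf_fupd n x j _ Hj), Hx. fold r.
  rewrite (bigf_ext Rmult 1 n (fun k => fupd x j _ k ^ e k)
             (fupd (fun k => x k ^ e k) j ((1 - (x j + r)) ^ e j)))
    by (intros k _; unfold fupd; now destruct (Nat.eqb_spec k j); subst).
  rewrite (bigf_ext Rmult 1 n (fun k => x k ^ fupd e j b k) (fupd (fun k => x k ^ e k) j (x j ^ b)))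
    by (intros k _; unfold fupd; now destruct (Nat.eqb_spec k j); subst).
  rewrite (prodf_fupd n _ j (x j ^ b) Hj), (prodf_fupd n _ j ((1 - (x j + r)) ^ e j) Hj).
  replace (1 - (1 - (x j + r) + r)) with (x j) by ring. ring.
Qed.

Lemma bcomb_int_reflect n j L : (j < n)%nat ->
  bcomb_int n 1 (map (bterm_reflect j) L) = bcomb_int n 1 L.
Proof.
  intros Hj. unfold bcomb_int. induction L as [|[[c b] e] L IH]; simpl; auto.
  rewrite IH. unfold bmonom_int. rewrite (sumn_fupd n e j b Hj), (sumn_extract n e j Hj).
  replace (e j + (b + sumn n (fupd e j 0)) + n)%nat
    with (b + (e j + sumn n (fupd e j 0)) + n)%nat by lia.
  rewrite (bigf_ext Rmult 1 n (fun k => factR (fupd e j b k)) (fupd (fun k => factR (e k)) j (factR b)))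
    by (intros k _; unfold fupd; now destruct (Nat.eqb_spec k j); subst).
  rewrite (prodf_fupd n _ j _ Hj), (prodf_extract n (fun k => factR (e k)) j Hj).
  field. apply factR_neq0.
Qed.

Lemma simplex_int_transp n i m e : (i < n)%nat -> (m < n)%nat -> pvars_lt n e ->
  simplex_int n 1 (peval (psubst (psub_transp i m) e)) = simplex_int n 1 (peval e).
Proof.
  intros Hi Hm He. destruct (bpoly_peval n e He) as [L E].
  rewrite (simplex_int_bpoly n (peval e) L E), <- (bcomb_int_transp n i m L Hi Hm).
  apply simplex_int_bpoly. intros x. rewrite peval_subst, E. now apply bcomb_transp.
Qed.

Lemma simplex_int_reflect n j e : (j < n)%nat -> pvars_lt n e ->
  simplex_int n 1 (peval (psubst (psub_reflect n j) e)) = simplex_int n 1 (peval e).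
Proof.
  intros Hj He. destruct (bpoly_peval n e He) as [L E].
  rewrite (simplex_int_bpoly n (peval e) L E), <- (bcomb_int_reflect n j L Hj).
  apply simplex_int_bpoly. intros x. rewrite peval_subst, E, <- bcomb_reflect by auto. f_equal.
  apply functional_extensionality; intro k. unfold psub_reflect, fupd.
  destruct (Nat.eqb k j); auto. apply peval_plam.
Qed.

Definition poly1 p (g : R -> R) : Prop :=
  exists c : nat -> R, forall u, g u = sumf (S p) (fun k => c k * u ^ k).

Lemma poly1_ext p f g : (forall u, f u = g u) -> poly1 p g -> poly1 p f.
Proof. intros H [c Hc]. exists c. intros u. now rewrite H. Qed.

Lemma poly1_const r : poly1 0 (fun _ => r).
Proof. exists (fun _ => r). intros u. simpl. ring. Qed.

Lemma poly1_mono p q g : (p <= q)%nat -> poly1 p g -> poly1 q g.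
Proof.
  intros Hpq [c Hc]. exists (fun k => if Nat.leb k p then c k else 0). intros u.
  rewrite Hc. induction Hpq.
  - apply bigf_ext. intros k Hk.
    now replace (Nat.leb k p) with true by (symmetry; apply Nat.leb_le; lia).
  - rewrite (sumf_recr (S m)), <- IHHpq.
    replace (Nat.leb (S m) p) with false by (symmetry; apply Nat.leb_gt; lia). ring.
Qed.

Lemma poly1_add p f g : poly1 p f -> poly1 p g -> poly1 p (fun u => f u + g u).
Proof.
  intros [c1 H1] [c2 H2]. exists (fun k => c1 k + c2 k). intros u.
  rewrite H1, H2, <- sumf_split. apply bigf_ext. intros; ring.
Qed.

Lemma poly1_scal p a g : poly1 p g -> poly1 p (fun u => a * g u).
Proof.
  intros [c H]. exists (fun k => a * c k). intros u.
  rewrite H, <- sumf_scal. apply bigf_ext. intros; ring.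
Qed.

Lemma poly1_mulX p g : poly1 p g -> poly1 (S p) (fun u => u * g u).
Proof.
  intros [c H]. exists (fun k => match k with O => 0 | S k' => c k' end). intros u.
  rewrite H, <- sumf_scal.
  change (sumf (S p) (fun k => u * (c k * u ^ k))
          = 0 * u ^ 0 + sumf (S p) (fun k => c k * u ^ S k)).
  rewrite Rmult_0_l, Rplus_0_l. apply bigf_ext. intros; simpl; ring.
Qed.

Lemma poly1_S_inv p f : poly1 (S p) f ->
  exists c0 g, poly1 p g /\ forall u, f u = c0 + u * g u.
Proof.
  intros [c H]. exists (c O), (fun u => sumf (S p) (fun k => c (S k) * u ^ k)). split.
  - now exists (fun k => c (S k)).
  - intros u. rewrite H, <- sumf_scal.
    change (c O * u ^ 0 + sumf (S p) (fun k => c (S k) * u ^ S k)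
            = c O + sumf (S p) (fun k => u * (c (S k) * u ^ k))).
    f_equal; [simpl; ring|]. apply bigf_ext. intros; simpl; ring.
Qed.

Lemma poly1_mul p q f g : poly1 p f -> poly1 q g -> poly1 (p + q) (fun u => f u * g u).
Proof.
  revert f; induction p; intros f Hf Hg.
  - destruct Hf as [c Hc]. apply (poly1_ext _ _ (fun u => c O * g u)); [|now apply poly1_scal].
    intros u. rewrite Hc. simpl. ring.
  - destruct (poly1_S_inv p f Hf) as (c0 & f' & Hf' & E).
    apply (poly1_ext _ _ (fun u => c0 * g u + u * (f' u * g u))).
    + intros u. rewrite E. ring.
    + apply poly1_add; [apply (poly1_mono q); [lia | now apply poly1_scal]|].
      now apply poly1_mulX, IHp.
Qed.

Lemma poly1_peval e : pvars_lt 1 e -> poly1 (pdeg e) (fun u => peval e (fun _ => u)).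
Proof.
  induction e; simpl; intros He.
  - apply poly1_const.
  - apply (poly1_ext _ _ (fun u => u * 1)); [intros; ring|]. apply poly1_mulX, poly1_const.
  - destruct He as [H1 H2]. apply poly1_add;
      [apply (poly1_mono (pdeg e1)) | apply (poly1_mono (pdeg e2))]; auto; lia.
  - destruct He as [H1 H2]. now apply poly1_mul; auto.
Qed.

Lemma multi_indices_1 p : multi_indices 1 p = map (fun k => [k]) (seq 0 (S p)).
Proof.
  unfold multi_indices. generalize (seq 0 (S p)). intros l.
  induction l as [|a l IH]; [reflexivity|]. simpl in *. now rewrite IH.
Qed.

Lemma fold_right_map_seq (f : nat -> R) n : forall s,
  fold_right Rplus 0 (map f (seq s n)) = sumf n (fun k => f (s + k)%nat).
Proof.
  induction n; intros s; simpl; auto. rewrite IHn, Nat.add_0_r. f_equal.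
  apply bigf_ext. intros k _. f_equal. lia.
Qed.

Lemma in_Pp_poly1 p g : poly1 p g -> in_Pp 1 p (fun z => g (z 0%nat)).
Proof.
  intros [c H]. exists (fun a => match a with [k] => c k | _ => 0 end). intros x.
  rewrite multi_indices_1, map_map, fold_right_map_seq, H. apply bigf_ext. intros k _. simpl. ring.
Qed.

Lemma in_Pp_peval1 p e : pvars_lt 1 e -> (pdeg e <= p)%nat -> in_Pp 1 p (peval e).
Proof.
  intros He Hd. destruct (in_Pp_poly1 p _ (poly1_mono _ _ _ Hd (poly1_peval e He))) as [c Hc].
  exists c. intros x. rewrite <- Hc. apply (peval_ext 1); auto.
  intros k Hk. now replace k with 0%nat by lia.
Qed.

Fixpoint ppow (e : pexpr) (k : nat) : pexpr := match k with O => PC 1 | S k' => PM e (ppow e k') end.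

Fixpoint pmonom (off : nat) (al : list nat) : pexpr :=
  match al with [] => PC 1 | a :: al' => PM (ppow (PV off) a) (pmonom (S off) al') end.

Lemma peval_pmonom al : forall off x, peval (pmonom off al) x = monom al (fun j => x (off + j)%nat).
Proof.
  assert (Hpow : forall e k x, peval (ppow e k) x = peval e x ^ k) by (induction k; simpl; congruence).
  induction al; intros off x; simpl; auto. rewrite Hpow, IHal, Nat.add_0_r. do 2 f_equal.
  apply functional_extensionality; intro j. f_equal. lia.
Qed.

Lemma pmonom_bounds n al : forall off, (off + length al <= n)%nat ->
  pvars_lt n (pmonom off al) /\ (pdeg (pmonom off al) <= fold_right Nat.add 0%nat al)%nat.
Proof.
  assert (Hpow : forall off k, (off < n)%nat ->
                 pvars_lt n (ppow (PV off) k) /\ (pdeg (ppow (PV off) k) <= k)%nat)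
    by (induction k; simpl; intuition lia).
  induction al; intros off H; simpl in *; [split; auto; lia|].
  destruct (Hpow off a) as [H1 H2]; [lia|]. destruct (IHal (S off)) as [H3 H4]; [lia|].
  split; [auto | lia].
Qed.

Lemma multi_indices_spec n : forall p a, In a (multi_indices n p) ->
  length a = n /\ (fold_right Nat.add 0%nat a <= p)%nat.
Proof.
  induction n; intros p a H.
  - destruct H as [<-|[]]. simpl; lia.
  - apply in_flat_map in H as [k [Hk H]]. apply in_map_iff in H as [a' [<- Ha']].
    apply in_seq in Hk. destruct (IHn _ _ Ha'). simpl. lia.
Qed.

Lemma in_Pp_peval n p v : in_Pp n p v ->
  exists e, pvars_lt n e /\ (pdeg e <= p)%nat /\ forall x, v x = peval e x.
Proof.
  intros [c Hc].
  exists (fold_right (fun a acc => PA (PM (PC (c a)) (pmonom 0 a)) acc) (PC 0) (multi_indices n p)).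
  assert (HP := multi_indices_spec n p). revert Hc HP. generalize (multi_indices n p).
  intros l Hc HP. split; [|split].
  - clear Hc. induction l as [|a l IH]; simpl; auto.
    destruct (HP a (or_introl eq_refl)). split; [split; [exact I | apply pmonom_bounds; lia]|].
    apply IH. intros; apply HP; simpl; auto.
  - clear Hc. induction l as [|a l IH]; simpl; [lia|].
    destruct (HP a (or_introl eq_refl)). destruct (pmonom_bounds n a 0) as [_ Hd]; [lia|].
    enough (pdeg (fold_right (fun a acc => PA (PM (PC (c a)) (pmonom 0 a)) acc) (PC 0) l) <= p)%nat
      by lia.
    apply IH. intros; apply HP; simpl; auto.
  - intros x. rewrite Hc. clear. induction l; simpl; auto. now rewrite IHl, peval_pmonom.
Qed.

Lemma inv_ineq_const_ge0 p C : inv_ineq_const p 1 C -> 0 <= C.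
Proof.
  intros H. specialize (H _ (in_Pp_peval1 p (PC 1) I (Nat.le_0_l p)) 0%nat Nat.lt_0_1).
  assert (E : L2norm 1 (peval (PC 1)) = 1).
  { unfold L2norm. simpl. rewrite RInt_const. simpl_R_ops.
    replace ((1 - 0) * (1 * (1 * 1))) with 1 by ring. apply sqrt_1. }
  rewrite E in H. pose proof (sqrt_pos (simplex_int 1 1 (fun x => partial 0 (peval (PC 1)) x ^ 2))).
  unfold L2norm in H. lra.
Qed.

Lemma sqrt_le_mult_sqrt A B C : 0 <= A -> 0 <= B -> 0 <= C ->
  sqrt A <= C * sqrt B -> A <= C ^ 2 * B.
Proof.
  intros HA HB HC H. rewrite <- (sqrt_sqrt A HA), <- (sqrt_sqrt B HB).
  pose proof (sqrt_pos A). pose proof (sqrt_pos B). nra.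
Qed.

Lemma RInt_scal_R (f : R -> R) a b l : ex_RInt f a b -> RInt (fun x => l * f x) a b = l * RInt f a b.
Proof. exact (RInt_scal f a b l). Qed.

Lemma RInt_rescale (f : R -> R) L : ex_RInt f 0 L ->
  RInt (fun t => L * f (L * t)) 0 1 = RInt f 0 L.
Proof.
  intros H. pose proof (RInt_comp_lin f L 0 0 1) as E.
  replace (L * 0 + 0) with 0 in E by ring. replace (L * 1 + 0) with L in E by ring.
  rewrite <- (E H). apply RInt_ext. intros t _. simpl_R_ops. now rewrite Rplus_0_r.
Qed.

Lemma L2norm_1 f : L2norm 1 f = sqrt (RInt (fun t => f (scons t (fun _ => 0)) ^ 2) 0 1).
Proof. reflexivity. Qed.

(* the inequality defining [C], rescaled from [0, 1] to [0, L] *)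
Lemma RInt_sq_deriv_le p C L (f f' : R -> R) : inv_ineq_const p 1 C -> 0 < L ->
  in_Pp 1 p (fun z => f (L * z 0%nat)) -> (forall t, is_derive f t (f' t)) ->
  ex_RInt (fun t => f' t ^ 2) 0 L ->
  L ^ 2 * RInt (fun t => f' t ^ 2) 0 L <= C ^ 2 * RInt (fun t => f t ^ 2) 0 L.
Proof.
  intros HC HL Hp Hd Hi.
  assert (Hdf : forall t, ex_derive f t) by (intros t; eexists; apply Hd).
  assert (Hf : ex_RInt (fun t => f t ^ 2) 0 L).
  { apply (@ex_RInt_continuous R_CompleteNormedModule). intros t _.
    apply (@ex_derive_continuous R_AbsRing R_NormedModule). auto_derive. auto. }
  assert (Hc : forall t, Derive (fun s => f (L * s)) t = L * f' (L * t)).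
  { intros t. apply is_derive_unique, (is_derive_comp f (fun s => L * s) t (f' (L * t)) L (Hd _)).
    auto_derive; auto; ring. }
  set (I' := RInt (fun t => f' t ^ 2) 0 L : R). set (I := RInt (fun t => f t ^ 2) 0 L : R).
  assert (EA : RInt (fun t => partial 0 (fun z => f (L * z 0%nat)) (scons t (fun _ => 0)) ^ 2) 0 1
               = L * I').
  { unfold I'. rewrite <- (RInt_scal_R _ _ _ L Hi).
    rewrite <- (RInt_rescale (fun t => L * f' t ^ 2) L)
      by apply (ex_RInt_scal (fun t => f' t ^ 2) _ _ _ Hi).
    apply RInt_ext. intros t _. unfold partial.
    rewrite (Derive_ext _ (fun s => f (L * s))), Hc by reflexivity. simpl. ring. }
  assert (EB : RInt (fun t => f (L * scons t (fun _ => 0) 0%nat) ^ 2) 0 1 = I / L).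
  { apply (Rmult_eq_reg_l L); [|lra]. replace (L * (I / L)) with I by (field; lra).
    unfold I. rewrite <- (RInt_rescale (fun t => f t ^ 2) L Hf).
    rewrite <- RInt_scal_R; [apply RInt_ext; intros t _; simpl; ring|].
    apply (@ex_RInt_continuous R_CompleteNormedModule). intros t _.
    apply (@ex_derive_continuous R_AbsRing R_NormedModule). simpl. auto_derive. auto. }
  assert (HI' : 0 <= I') by (apply RInt_ge_0; [lra | exact Hi | intros; apply pow2_ge_0]).
  assert (HI : 0 <= I) by (apply RInt_ge_0; [lra | exact Hf | intros; apply pow2_ge_0]).
  assert (HC0 : 0 <= C) by (eapply inv_ineq_const_ge0; eauto).
  pose proof (HC _ Hp 0%nat Nat.lt_0_1) as H. rewrite !L2norm_1, EA, EB in H.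
  apply sqrt_le_mult_sqrt in H; [| apply Rmult_le_pos; lra | apply Rdiv_le_0_compat; lra | exact HC0].
  replace (C ^ 2 * I) with (L * (C ^ 2 * (I / L))) by (field; lra).
  replace (L ^ 2 * I') with (L * (L * I')) by ring.
  apply Rmult_le_compat_l; lra.
Qed.

Lemma is_derive_peval_upd e y m t :
  is_derive (fun t => peval e (upd y m t)) t (peval (pderiv (basis m) e) (upd y m t)).
Proof.
  rewrite (upd_line y m t).
  eapply is_derive_ext; [|apply is_derive_peval_line]. intros s. cbv beta. now rewrite <- upd_line.
Qed.

Lemma ex_RInt_peval_upd e y m a b : ex_RInt (fun t => peval e (upd y m t)) a b.
Proof.
  eapply ex_RInt_ext; [|apply (ex_RInt_peval_line e (upd y m 0) (basis m))].
  intros t _. cbv beta. now rewrite <- upd_line.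
Qed.

Lemma in_Pp_peval_upd p m e y c : pvars_lt (S m) e -> (pdeg e <= p)%nat ->
  in_Pp 1 p (fun z => peval e (upd y m (c * z 0%nat))).
Proof.
  intros He Hd.
  set (s k := if Nat.eqb k m then PM (PC c) (PV 0) else PC (y k)).
  destruct (in_Pp_peval1 p (psubst s e)) as [cf Hcf].
  - apply (pvars_lt_subst (S m)); auto. intros k _. unfold s.
    destruct (Nat.eqb k m); simpl; repeat split; lia.
  - eapply Nat.le_trans; [apply pdeg_subst | exact Hd]. intros k. unfold s.
    destruct (Nat.eqb k m); simpl; lia.
  - exists cf. intros z. rewrite <- Hcf, peval_subst. f_equal.
    apply functional_extensionality; intro k. unfold s, upd. now destruct (Nat.eqb k m).
Qed.

(* Slicing [K^(m+1)] into segments parallel to the last axis: on the segment through [y],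
   of length [1 - sum_(k < m) y_k], the scaled univariate inequality applies. *)
Lemma simplex_int_fiber p C m e : inv_ineq_const p 1 C -> pvars_lt (S m) e -> (pdeg e <= p)%nat ->
  simplex_int (S m) 1 (peval (PM (psq (plam m)) (psq (pderiv (basis m) e))))
  <= simplex_int (S m) 1 (peval (PM (PC (C * C)) (psq e))).
Proof.
  intros HC He Hd. rewrite !simplex_int_peel_last. apply simplex_int_le.
  - apply bpoly_RInt_last. pose proof (pvars_lt_plam m (S m) (le_S _ _ (le_n m))).
    pose proof (pvars_lt_deriv _ (basis m) e He). simpl. tauto.
  - apply bpoly_RInt_last. simpl. tauto.
  - intros y [_ Hy]. set (L := 1 - sumf m y).
    assert (HL : forall t, peval (plam m) (upd y m t) = L).
    { intros t. rewrite peval_plam. change (upd y m t) with (fupd y m t).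
      now rewrite bigf_fupd_out by lia. }
    destruct (Req_dec L 0) as [H0 | H0]; [rewrite H0, !RInt_point; apply Rle_refl|].
    assert (Hsq : forall g, ex_RInt (fun t => peval g (upd y m t) ^ 2) 0 L)
      by (intros g; apply (ex_RInt_peval_upd (PM g (PM g (PC 1))))).
    set (D := pderiv (basis m) e).
    rewrite (RInt_ext _ (fun t => L ^ 2 * peval D (upd y m t) ^ 2)),
      (RInt_ext (fun t => peval (PM (PC (C * C)) (psq e)) (upd y m t))
                (fun t => C ^ 2 * peval e (upd y m t) ^ 2))
      by (intros; unfold psq; cbn [peval]; rewrite ?HL; as_R_eq; ring).
    rewrite (RInt_scal_R _ _ _ _ (Hsq D)), (RInt_scal_R _ _ _ _ (Hsq e)).
    apply (RInt_sq_deriv_le p C L _ _ HC).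
    + unfold L in *. lra.
    + exact (in_Pp_peval_upd p m e y L He Hd).
    + intros t. apply is_derive_peval_upd.
    + apply Hsq.
Qed.

(* [1 - sum_j x_j + x_k] is the length of the chord of [K^n] through [x] parallel to [e_k] *)
Definition axis_term n k e : pexpr := PM (psq (PA (plam n) (PV k))) (psq (pderiv (basis k) e)).

(* the chord of [K^n] through [x] parallel to [e_i - e_j] has length [x_i + x_j] *)
Definition edge_term i j e : pexpr :=
  PM (psq (PA (PV i) (PV j))) (psq (PA (pderiv (basis i) e) (PM (PC (-1)) (pderiv (basis j) e)))).

Lemma peval_axis_term n k e x : peval (axis_term n k e) x =
  (1 - sumf n x + x k) ^ 2 * peval (pderiv (basis k) e) x ^ 2.
Proof. unfold axis_term, psq. cbn [peval]. rewrite peval_plam. ring. Qed.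

Lemma peval_edge_term i j e x : peval (edge_term i j e) x =
  (x i + x j) ^ 2 * (peval (pderiv (basis i) e) x - peval (pderiv (basis j) e) x) ^ 2.
Proof. unfold edge_term, psq. cbn [peval]. ring. Qed.

Lemma pvars_lt_axis_term n k e : (k < n)%nat -> pvars_lt n e -> pvars_lt n (axis_term n k e).
Proof.
  intros Hk He. pose proof (pvars_lt_plam n n (le_n n)). pose proof (pvars_lt_deriv n (basis k) e He).
  simpl. tauto.
Qed.

Lemma pvars_lt_edge_term n i j e : (i < n)%nat -> (j < n)%nat -> pvars_lt n e ->
  pvars_lt n (edge_term i j e).
Proof.
  intros Hi Hj He.
  pose proof (pvars_lt_deriv n (basis i) e He). pose proof (pvars_lt_deriv n (basis j) e He).
  simpl. tauto.
Qed.

Lemma basis_transp k m j : basis m (transp k m j) = basis k j.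
Proof.
  unfold basis, transp. destruct (Nat.eqb_spec j k); subst.
  - now rewrite Nat.eqb_refl.
  - destruct (Nat.eqb_spec j m); subst.
    + destruct (Nat.eqb_spec k m); [lia | reflexivity].
    + destruct (Nat.eqb_spec j m); [lia | reflexivity].
Qed.

Lemma peval_pderiv_transp k m e x :
  peval (pderiv (basis m) (psubst (psub_transp k m) e)) x
  = peval (pderiv (basis k) e) (fun j => x (transp k m j)).
Proof.
  rewrite pderiv_subst. do 2 f_equal. apply functional_extensionality; intro j. apply basis_transp.
Qed.

Lemma sumf_basis n i : (i < n)%nat -> sumf n (basis i) = 1.
Proof.
  intros H. rewrite (sumf_extract n (basis i) i H). unfold basis at 1. rewrite Nat.eqb_refl.
  rewrite (bigf_ext Rplus 0 n _ (fun _ => 0)), sumf0; [ring|].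
  intros k _. unfold fupd, basis. now destruct (Nat.eqb k i).
Qed.

Lemma pderiv_psub_reflect n i j k x : (i < n)%nat -> i <> j ->
  peval (pderiv (basis i) (psub_reflect n j k)) x = 1 * basis i k + (-1) * basis j k.
Proof.
  intros Hi Hij. unfold psub_reflect. destruct (Nat.eqb_spec k j).
  - subst. rewrite pderiv_plam, sumf_basis by auto. unfold basis. rewrite Nat.eqb_refl.
    destruct (Nat.eqb_spec j i); [lia | ring].
  - cbn [pderiv peval]. unfold basis. destruct (Nat.eqb_spec k j); [lia|].
    destruct (Nat.eqb k i); ring.
Qed.

Lemma peval_axis_term_transp m k e x : (k < S m)%nat ->
  peval (psubst (psub_transp k m) (axis_term (S m) k e)) x
  = peval (PM (psq (plam m)) (psq (pderiv (basis m) (psubst (psub_transp k m) e)))) x.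
Proof.
  intros Hk. rewrite peval_subst, peval_axis_term. unfold psq. cbn [peval].
  rewrite peval_pderiv_transp, peval_plam.
  change (fun j => peval (psub_transp k m j) x) with (fun j => x (transp k m j)).
  rewrite sumf_transp, sumf_recr by lia. simpl. unfold transp. rewrite Nat.eqb_refl. ring.
Qed.

Lemma peval_edge_term_reflect_transp m i j e x : (i < S m)%nat -> (j < S m)%nat -> i <> j ->
  peval (psubst (psub_transp i m) (psubst (psub_reflect (S m) j) (edge_term i j e))) x
  = peval (PM (psq (plam m))
      (psq (pderiv (basis m) (psubst (psub_transp i m) (psubst (psub_reflect (S m) j) e))))) x.
Proof.
  intros Hi Hj Hij. rewrite !peval_subst, peval_edge_term. unfold psq. cbn [peval].
  rewrite pderiv_subst, peval_plam.
  replace (fun k => peval (pderiv (basis m) (psub_transp i m k)) x) with (basis i)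
    by (apply functional_extensionality; intro k; symmetry; apply basis_transp).
  rewrite pderiv_subst. set (z k := peval (psub_transp i m k) x).
  replace (fun k => peval (pderiv (basis i) (psub_reflect (S m) j k)) z)
    with (fun k => 1 * basis i k + (-1) * basis j k)
    by (apply functional_extensionality; intro k; symmetry; now apply pderiv_psub_reflect).
  rewrite pderiv_lin.
  assert (Ei : peval (psub_reflect (S m) j i) z = x m).
  { unfold psub_reflect. destruct (Nat.eqb_spec i j); [lia|].
    unfold z, psub_transp, transp. simpl. now rewrite Nat.eqb_refl. }
  assert (Ej : peval (psub_reflect (S m) j j) z = 1 - sumf (S m) x).
  { unfold psub_reflect. rewrite Nat.eqb_refl, peval_plam.
    change (sumf (S m) z) with (sumf (S m) (fun k => x (transp i m k))).
    now rewrite sumf_transp by lia. }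
  rewrite Ei, Ej, sumf_recr. ring.
Qed.

Section ChordTerms.

Variables (p : nat) (C : R) (m : nat) (e : pexpr).
Hypotheses (HC : inv_ineq_const p 1 C) (He : pvars_lt (S m) e) (Hd : (pdeg e <= p)%nat).

Let sq_bound := PM (PC (C * C)) (psq e).

Lemma pvars_lt_sq_bound : pvars_lt (S m) sq_bound.
Proof. simpl. tauto. Qed.

(* the transposition of [k] and [m] maps the chord direction [e_k] to [e_m] *)
Lemma simplex_int_axis_term_le k : (k < S m)%nat ->
  simplex_int (S m) 1 (peval (axis_term (S m) k e)) <= simplex_int (S m) 1 (peval sq_bound).
Proof.
  intros Hk.
  assert (Hs : forall j, (j < S m)%nat -> pvars_lt (S m) (psub_transp k m j))
    by (intros; apply transp_lt; lia).
  rewrite <- (simplex_int_transp (S m) k m) by (auto using pvars_lt_axis_term).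
  rewrite <- (simplex_int_transp (S m) k m sq_bound) by (auto using pvars_lt_sq_bound).
  eapply Rle_trans; [apply Req_le|].
  - apply simplex_int_ext. intros x. now apply peval_axis_term_transp.
  - apply (simplex_int_fiber p C m); auto.
    + apply (pvars_lt_subst (S m)); auto.
    + eapply Nat.le_trans; [apply pdeg_subst, pdeg_psub_transp | exact Hd].
Qed.

(* the reflection at [j] followed by the transposition of [i] and [m] maps the chord direction
   [e_i - e_j] to [e_m] *)
Lemma simplex_int_edge_term_le i j : (i < S m)%nat -> (j < S m)%nat -> i <> j ->
  simplex_int (S m) 1 (peval (edge_term i j e)) <= simplex_int (S m) 1 (peval sq_bound).
Proof.
  intros Hi Hj Hij.
  assert (Hr : forall k, (k < S m)%nat -> pvars_lt (S m) (psub_reflect (S m) j k))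
    by (intros; now apply pvars_lt_psub_reflect).
  assert (Hs : forall k, (k < S m)%nat -> pvars_lt (S m) (psub_transp i m k))
    by (intros; apply transp_lt; lia).
  rewrite <- (simplex_int_reflect (S m) j) by (auto using pvars_lt_edge_term).
  rewrite <- (simplex_int_transp (S m) i m)
    by (try lia; apply (pvars_lt_subst (S m)); auto using pvars_lt_edge_term).
  rewrite <- (simplex_int_reflect (S m) j sq_bound) by (auto using pvars_lt_sq_bound).
  rewrite <- (simplex_int_transp (S m) i m (psubst (psub_reflect (S m) j) sq_bound))
    by (try lia; apply (pvars_lt_subst (S m)); auto using pvars_lt_sq_bound).
  eapply Rle_trans; [apply Req_le|].
  - apply simplex_int_ext. intros x. now apply peval_edge_term_reflect_transp.
  - apply (simplex_int_fiber p C m); auto.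
    + apply (pvars_lt_subst (S m)); auto. apply (pvars_lt_subst (S m)); auto.
    + eapply Nat.le_trans; [apply pdeg_subst, pdeg_psub_transp|].
      eapply Nat.le_trans; [apply pdeg_subst, pdeg_psub_reflect | exact Hd].
Qed.

End ChordTerms.

Lemma cauchy_schwarz_sumf n : forall a b,
  sumf n (fun j => a j * b j) ^ 2 <= sumf n (fun j => a j ^ 2) * sumf n (fun j => b j ^ 2).
Proof.
  induction n; intros a b; cbn [bigf]; [lra|].
  pose proof (IHn (fun k => a (S k)) (fun k => b (S k))) as IH. cbv beta in IH.
  set (Sab := sumf n (fun k => a (S k) * b (S k))) in *.
  set (A := sumf n (fun k => a (S k) ^ 2)) in *.
  set (B := sumf n (fun k => b (S k) ^ 2)) in *.
  assert (A0 : 0 <= A) by (apply sumf_ge0; intros; apply pow2_ge_0).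
  assert (B0 : 0 <= B) by (apply sumf_ge0; intros; apply pow2_ge_0).
  set (a0 := a 0%nat). set (b0 := b 0%nat).
  enough (2 * a0 * b0 * Sab <= a0 ^ 2 * B + b0 ^ 2 * A) by nra.
  destruct (Req_dec A 0) as [HA | HA].
  - rewrite HA in IH. assert (Sab = 0) by nra. rewrite H, HA. nra.
  - (* [A (a0^2 B + b0^2 A - 2 a0 b0 Sab) = (b0 A - a0 Sab)^2 + a0^2 (A B - Sab^2)] *)
    assert (0 <= (b0 * A - a0 * Sab) ^ 2 + a0 ^ 2 * (A * B - Sab ^ 2))
      by (apply Rplus_le_le_0_compat; [apply pow2_ge_0 | apply Rmult_le_pos; [apply pow2_ge_0 | lra]]).
    nra.
Qed.

Lemma sumf_fupd0_sq_le n i a : (i < n)%nat ->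
  sumf n (fupd a i 0) ^ 2 <= (INR n - 1) * sumf n (fupd (fun j => a j ^ 2) i 0).
Proof.
  intros Hi. set (b := fupd (fun _ => 1) i 0).
  assert (Hb : sumf n (fun j => b j ^ 2) = INR n - 1).
  { rewrite (bigf_ext Rplus 0 n _ b) by (intros j _; unfold b, fupd; destruct (Nat.eqb j i); ring).
    unfold b. rewrite sumf_fupd_const by exact Hi. ring. }
  rewrite <- Hb, Rmult_comm.
  rewrite (bigf_ext Rplus 0 n (fupd (fun j => a j ^ 2) i 0) (fun j => fupd a i 0 j ^ 2))
    by (intros j _; unfold fupd; destruct (Nat.eqb j i); ring).
  rewrite (bigf_ext Rplus 0 n (fupd a i 0) (fun j => fupd a i 0 j * b j))
    by (intros j _; unfold b, fupd; destruct (Nat.eqb j i); ring).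
  apply cauchy_schwarz_sumf.
Qed.

Lemma sq_sum_le_weighted N Q s r : 0 <= N -> 0 <= Q -> r ^ 2 <= N * Q ->
  (s + r) ^ 2 <= (2 * N + 1) * (s ^ 2 + Q / 2).
Proof.
  intros HN HQ Hr. destruct (Req_dec N 0) as [H0 | H0].
  - subst. assert (r = 0) by nra. subst. nra.
  - (* [2N ((2N + 1)(s^2 + Q/2) - (s + r)^2) = (2N s - r)^2 + (2N + 1)(N Q - r^2)] *)
    assert (0 <= (2 * N * s - r) ^ 2 + (2 * N + 1) * (N * Q - r ^ 2))
      by (apply Rplus_le_le_0_compat; [apply pow2_ge_0 | apply Rmult_le_pos; lra]).
    assert (0 < N) by lra. nra.
Qed.

Lemma sq_weighted_pair_lb a b c u w : 0 <= a -> 0 <= b -> 0 <= c ->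
  b ^ 2 * (u + w) ^ 2 / 2 <= (a + b) ^ 2 * u ^ 2 + (c + b) ^ 2 * w ^ 2.
Proof.
  intros Ha Hb Hc.
  assert (b ^ 2 * u ^ 2 <= (a + b) ^ 2 * u ^ 2) by (apply Rmult_le_compat_r; [apply pow2_ge_0 | nra]).
  assert (b ^ 2 * w ^ 2 <= (c + b) ^ 2 * w ^ 2) by (apply Rmult_le_compat_r; [apply pow2_ge_0 | nra]).
  assert (b ^ 2 * (u + w) ^ 2 / 2 <= b ^ 2 * (u ^ 2 + w ^ 2))
    by (pose proof (pow2_ge_0 (u - w)); pose proof (pow2_ge_0 b); nra).
  lra.
Qed.

(* With [lambda_j = 1 - sum_k x_k + x_j], every [j <> i] contributes at least [x_j^2 g_i^2 / 2]
   to the sum, and Cauchy-Schwarz on [lambda_i + sum_(j <> i) x_j = 1] does the rest. *)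
Lemma pointwise_partial_sq_le n i (x g : nat -> R) :
  (i < n)%nat -> (forall k, (k < n)%nat -> 0 <= x k) -> sumf n x <= 1 ->
  g i ^ 2 <= (2 * INR n - 1) * ((1 - sumf n x + x i) ^ 2 * g i ^ 2 +
    sumf n (fupd (fun j => (x i + x j) ^ 2 * (g i - g j) ^ 2 + (1 - sumf n x + x j) ^ 2 * g j ^ 2)
                 i 0)).
Proof.
  intros Hi Hx Hs.
  set (lam0 := 1 - sumf n x). set (T := sumf n (fupd _ i 0)).
  set (r := sumf n (fupd x i 0)). set (Q := sumf n (fupd (fun j => x j ^ 2) i 0)).
  set (N := INR n - 1).
  assert (HQ : 0 <= Q)
    by (apply sumf_ge0; intros k _; unfold fupd; destruct (Nat.eqb k i); [lra | apply pow2_ge_0]).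
  assert (HN : 0 <= N) by (unfold N; pose proof (le_INR 1 n ltac:(lia)); simpl in *; lra).
  assert (HT : g i ^ 2 / 2 * Q <= T).
  { unfold T, Q. rewrite <- sumf_scal. apply sumf_le. intros j Hj. unfold fupd.
    destruct (Nat.eqb_spec j i); [lra|].
    replace (g i ^ 2 / 2 * x j ^ 2) with (x j ^ 2 * (g i - g j + g j) ^ 2 / 2) by field.
    apply sq_weighted_pair_lb; auto. unfold lam0. lra. }
  assert (Hr : lam0 + x i + r = 1) by (unfold lam0, r; rewrite (sumf_extract n x i Hi); ring).
  assert (Key : (lam0 + x i + r) ^ 2 <= (2 * N + 1) * ((lam0 + x i) ^ 2 + Q / 2))
    by (apply sq_sum_le_weighted; auto; apply sumf_fupd0_sq_le, Hi).
  rewrite Hr in Key. replace (2 * INR n - 1) with (2 * N + 1) by (unfold N; ring).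
  pose proof (pow2_ge_0 (g i)).
  assert (g i ^ 2 <= (2 * N + 1) * ((lam0 + x i) ^ 2 + Q / 2) * g i ^ 2) by nra.
  assert (2 * N + 1 > 0) by lra. nra.
Qed.

Fixpoint pbig (N : nat) (F : nat -> pexpr) : pexpr :=
  match N with O => PC 0 | S N' => PA (F 0%nat) (pbig N' (fun k => F (S k))) end.

Lemma peval_pbig N : forall F x, peval (pbig N F) x = sumf N (fun j => peval (F j) x).
Proof. induction N; intros F x; simpl; auto. now rewrite IHN. Qed.

Lemma pvars_lt_pbig n N : forall F,
  (forall j, (j < N)%nat -> pvars_lt n (F j)) -> pvars_lt n (pbig N F).
Proof.
  induction N; intros F H; simpl; auto. split; [apply H; lia | apply IHN; intros; apply H; lia].
Qed.

Lemma simplex_int_PC0 n : simplex_int n 1 (peval (PC 0)) = 0.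
Proof.
  rewrite (simplex_int_ext n 1 _ (fun x => 0 * peval (PC 0) x)) by (intros; simpl; ring).
  rewrite simplex_int_scal; [ring | now apply bpoly_peval].
Qed.

Lemma simplex_int_PA n a b : pvars_lt n a -> pvars_lt n b ->
  simplex_int n 1 (peval (PA a b)) = simplex_int n 1 (peval a) + simplex_int n 1 (peval b).
Proof. intros Ha Hb. apply (simplex_int_plus n (peval a) (peval b)); now apply bpoly_peval. Qed.

Lemma simplex_int_pbig n N : forall F, (forall j, (j < N)%nat -> pvars_lt n (F j)) ->
  simplex_int n 1 (peval (pbig N F)) = sumf N (fun j => simplex_int n 1 (peval (F j))).
Proof.
  induction N; intros F H; cbn [pbig bigf].
  - apply simplex_int_PC0.
  - rewrite simplex_int_PA, IHN; [reflexivity | | apply H; lia | apply pvars_lt_pbig];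
      intros; apply H; lia.
Qed.

Definition chord_sum n i e : pexpr :=
  PM (PC (2 * INR n - 1)) (PA (axis_term n i e)
    (pbig n (fupd (fun j => PA (edge_term i j e) (axis_term n j e)) i (PC 0)))).

Lemma pvars_lt_chord_terms n i e j : (i < n)%nat -> (j < n)%nat -> pvars_lt n e ->
  pvars_lt n (fupd (fun j => PA (edge_term i j e) (axis_term n j e)) i (PC 0) j).
Proof.
  intros Hi Hj He. unfold fupd. destruct (Nat.eqb j i); [exact I|].
  split; [apply pvars_lt_edge_term | apply pvars_lt_axis_term]; auto.
Qed.

Lemma simplex_int_partial_sq_le_chord_sum n i e : (i < n)%nat -> pvars_lt n e ->
  simplex_int n 1 (fun x => peval (pderiv (basis i) e) x ^ 2)
  <= simplex_int n 1 (peval (chord_sum n i e)).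
Proof.
  intros Hi He. apply simplex_int_le.
  - apply (bpoly_peval n (PM (pderiv (basis i) e) (PM (pderiv (basis i) e) (PC 1)))).
    pose proof (pvars_lt_deriv n (basis i) e He). simpl; tauto.
  - apply bpoly_peval. split; [exact I | split; [now apply pvars_lt_axis_term|]].
    apply pvars_lt_pbig. intros; now apply pvars_lt_chord_terms.
  - intros x [Hx Hs]. eapply Rle_trans;
      [apply (pointwise_partial_sq_le n i x (fun k => peval (pderiv (basis k) e) x) Hi Hx Hs)|].
    apply Req_le. unfold chord_sum. cbn [peval]. rewrite peval_pbig, peval_axis_term. do 2 f_equal.
    apply bigf_ext. intros j _. unfold fupd. destruct (Nat.eqb j i); [reflexivity|].
    cbn [peval]. now rewrite peval_edge_term, peval_axis_term.
Qed.

Lemma simplex_int_partial_sq_le p C m e i : inv_ineq_const p 1 C -> pvars_lt (S m) e ->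
  (pdeg e <= p)%nat -> (i < S m)%nat ->
  simplex_int (S m) 1 (fun x => peval (pderiv (basis i) e) x ^ 2)
  <= ((2 * INR (S m) - 1) * C) ^ 2 * simplex_int (S m) 1 (fun x => peval e x ^ 2).
Proof.
  intros HC He Hd Hi. set (n := S m) in *. set (c := 2 * INR n - 1).
  set (G := fupd (fun j => PA (edge_term i j e) (axis_term n j e)) i (PC 0)).
  set (V := simplex_int n 1 (peval (PM (PC (C * C)) (psq e)))).
  assert (Hc : 1 <= c) by (unfold c, n; rewrite S_INR; pose proof (pos_INR m); lra).
  assert (HG : forall j, (j < n)%nat -> pvars_lt n (G j)) by (intros; now apply pvars_lt_chord_terms).
  assert (HV : V = C ^ 2 * simplex_int n 1 (fun x => peval e x ^ 2)).
  { unfold V. rewrite <- simplex_int_scal by (apply (bpoly_peval n (PM e (PM e (PC 1)))); simpl; tauto).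
    apply simplex_int_ext. intros x. unfold psq. simpl. ring. }
  assert (HA : simplex_int n 1 (peval (axis_term n i e)) <= V)
    by now apply (simplex_int_axis_term_le p).
  assert (HGj : forall j, (j < n)%nat -> simplex_int n 1 (peval (G j)) <= fupd (fun _ => 2 * V) i 0 j).
  { intros j Hj. unfold G, fupd. destruct (Nat.eqb_spec j i) as [_ | Hji].
    - rewrite simplex_int_PC0. lra.
    - rewrite simplex_int_PA by (auto using pvars_lt_edge_term, pvars_lt_axis_term).
      pose proof (simplex_int_edge_term_le p C m e HC He Hd i j Hi Hj (not_eq_sym Hji)) as HE.
      pose proof (simplex_int_axis_term_le p C m e HC He Hd j Hj) as HA'. fold n V in HE, HA'. lra. }
  assert (HGsum : sumf n (fun j => simplex_int n 1 (peval (G j))) <= (INR n - 1) * (2 * V)).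
  { eapply Rle_trans; [apply sumf_le, HGj|].
    rewrite sumf_fupd_const by exact Hi. lra. }
  eapply Rle_trans; [apply simplex_int_partial_sq_le_chord_sum; auto|].
  unfold chord_sum. fold c G.
  rewrite (simplex_int_ext n 1 _ (fun x => c * peval (PA (axis_term n i e) (pbig n G)) x))
    by reflexivity.
  assert (HAi : pvars_lt n (axis_term n i e)) by now apply pvars_lt_axis_term.
  assert (HGb : pvars_lt n (pbig n G)) by now apply pvars_lt_pbig.
  rewrite simplex_int_scal by (apply bpoly_peval; now split).
  rewrite simplex_int_PA, simplex_int_pbig by auto.
  replace ((c * C) ^ 2 * simplex_int n 1 (fun x => peval e x ^ 2)) with (c * (c * V))
    by (rewrite HV; ring).
  apply Rmult_le_compat_l; [lra|].
  replace (c * V) with (V + (INR n - 1) * (2 * V)) by (unfold c; ring). lra.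
Qed.

Lemma inv_ineq_const_from_1d p d C : (1 <= d)%nat -> inv_ineq_const p 1 C ->
  inv_ineq_const p d ((2 * INR d - 1) * C).
Proof.
  intros Hd HC v Hv i Hi. destruct d as [|m]; [lia|].
  destruct (in_Pp_peval _ _ _ Hv) as (e & He & Hdeg & Ev).
  replace v with (peval e) by (apply functional_extensionality; intros; now rewrite Ev).
  replace (partial i (peval e)) with (peval (pderiv (basis i) e))
    by (apply functional_extensionality; intros; now rewrite partial_peval).
  assert (Hc : 0 <= (2 * INR (S m) - 1) * C).
  { apply Rmult_le_pos; [rewrite S_INR; pose proof (pos_INR m); lra|].
    eapply inv_ineq_const_ge0; eauto. }
  unfold L2norm. rewrite <- (sqrt_pow2 _ Hc), <- sqrt_mult_alt by apply pow2_ge_0.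
  apply sqrt_le_1_alt. now apply (simplex_int_partial_sq_le p).
Qed.

Lemma linear_le_exp_factor d : (1 <= d)%nat -> 2 * INR d - 1 <= sqrt 5 / 4 * (2 * sqrt 2) ^ d.
Proof.
  intros Hd. set (K := sqrt 5 / 4 * (2 * sqrt 2) ^ d).
  assert (K0 : 0 <= K).
  { apply Rmult_le_pos; [pose proof (sqrt_pos 5); lra|]. apply pow_le. pose proof (sqrt_pos 2); lra. }
  assert (KK : K ^ 2 = 5 / 16 * 8 ^ d).
  { unfold K. rewrite Rpow_mult_distr, <- pow_mult, Nat.mul_comm, pow_mult.
    replace ((2 * sqrt 2) ^ 2) with 8 by (rewrite Rpow_mult_distr, pow2_sqrt; lra).
    unfold Rdiv. rewrite Rpow_mult_distr, pow2_sqrt by lra. field. }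
  assert (H8 : forall k, (2 * INR k + 3) ^ 2 <= 9 * 8 ^ k).
  { induction k; [simpl; lra|]. rewrite S_INR. simpl (8 ^ S k). pose proof (pos_INR k). nra. }
  assert ((2 * INR d - 1) ^ 2 <= K ^ 2).
  { rewrite KK. destruct d as [|[|k]]; [lia | simpl; lra|].
    pose proof (H8 k). pose proof (pow_le 8 k ltac:(lra)).
    replace (INR (S (S k))) with (INR k + 2) by (rewrite !S_INR; ring).
    replace (8 ^ S (S k)) with (64 * 8 ^ k) by (simpl; ring). nra. }
  nra.
Qed.

Lemma Glb_Rbar_le_mult (A B : R -> Prop) K : 0 < K -> (forall C, B C -> A (K * C)) ->
  Rbar_le (Glb_Rbar A) (Rbar_mult K (Glb_Rbar B)).
Proof.
  intros HK HAB.
  destruct (Glb_Rbar_correct A) as [lbA _], (Glb_Rbar_correct B) as [_ glbB].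
  assert (Hpinf : Rbar_mult K p_infty = p_infty).
  { simpl. destruct (Rle_dec 0 K) as [h|h]; [|lra]. now destruct (Rle_lt_or_eq_dec 0 K h); [|lra]. }
  destruct (Glb_Rbar A) as [a| |] eqn:EA; [| | now destruct (Rbar_mult K (Glb_Rbar B))].
  - assert (H : Rbar_le (Finite (a / K)) (Glb_Rbar B)).
    { apply glbB. intros C HC. simpl. apply (Rmult_le_reg_l K); auto.
      replace (K * (a / K)) with a by (field; lra). exact (lbA _ (HAB C HC)). }
    destruct (Glb_Rbar B) as [b| |]; simpl in *; [| now rewrite Hpinf | easy].
    apply (Rmult_le_compat_l K) in H; [|lra]. now replace (K * (a / K)) with a in H by (field; lra).
  - (* [B] is empty, since every [K * C] with [B C] would bound [Glb_Rbar A = +oo] *)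
    assert (H : Rbar_le p_infty (Glb_Rbar B)) by (apply glbB; intros C HC; exact (lbA _ (HAB C HC))).
    destruct (Glb_Rbar B); simpl in H; try easy. now rewrite Hpinf.
Qed.

Theorem theoremA2 (d p : nat) (hd : (1 <= d)%nat) :
  Rbar_le (best_const p d)
    (Rbar_mult (Finite (sqrt 5 / 4 * (2 * sqrt 2) ^ d)) (best_const p 1)).
Proof.
  apply Glb_Rbar_le_mult.
  - apply Rmult_lt_0_compat; [apply Rmult_lt_0_compat; [apply sqrt_lt_R0|]; lra|].
    apply pow_lt. pose proof (sqrt_lt_R0 2). lra.
  - intros C HC v Hv i Hi.
    eapply Rle_trans; [exact (inv_ineq_const_from_1d p d C hd HC v Hv i Hi)|].
    apply Rmult_le_compat_r; [apply sqrt_pos|].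
    apply Rmult_le_compat_r; [eapply inv_ineq_const_ge0; eauto | now apply linear_le_exp_factor].
Qed.
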